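(* Every ice fork with exactly two frozen vertices is a brog quiver.
   Context: A quiver is a finite directed multigraph with no loops and no oriented 2-cycles, whose vertex set is partitioned into mutable and frozen vertices; arrows between two frozen vertices are ignored. $b_{ik}$ = number of arrows $i\to k$ minus number of arrows $k\to i$; mutable vertices are labelled $[n]$; $Q|_S$ is the induced subquiver on $S$. Abundant: at least 2 arrows between every pair of vertices at least one of which is mutable. $F^+(r)=\{i: r\to i\}$, $F^-(r)=\{j:j\to r\}$. A fork is an abundant non-acyclic quiver with at most one frozen vertex and a vertex $r$ (point of return) such that $b_{ij}>b_{ri}$ and $b_{ij}>b_{jr}$ for all $i\in F^+(r),j\in F^-(r)$, and the subquivers induced on $F^+(r)$ and $F^-(r)$ are acyclic. An ice fork with point of return $r$ is a quiver with mutable vertices $[n]$ and frozen vertices $u_1,\dots,u_m$ ($m\ge1$) such that each $Q|_{[n]\cup\{u_i\}}$ is a fork with point of return $r$. A mutable vertex adjacent to at least one frozen vertex is red (resp. green) if all arrows between it and frozen vertices point towards (resp. away from) it. Two mutable vertices $i,j$ are complementary if for every frozen vertex $u$ with $b_{iu}\ne0$ and $b_{ju}\ne0$, $b_{iu}$ and $b_{ju}$ have opposite signs. A quiver is brog if its mutable vertices can be coloured blue, red, orange and green such that: (1) the vertices coloured red are exactly the red vertices; (2) the vertices coloured green are exactly the green vertices; (3) each blue vertex $i$ has $b_{ij}\ge0$ for every red $j$ and $b_{ij}\le0$ for every green $j$; (4) each orange vertex $i$ has $b_{ij}\ge0$ for every green $j$ and $b_{ij}\le0$ for every red $j$; (5)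 every blue vertex and every orange vertex are complementary. *)

From mathcomp Require Import all_boot all_order all_algebra.
Set Implicit Arguments. Unset Strict Implicit. Unset Printing Implicit Defensive.
Import Order.TTheory GRing.Theory Num.Theory.
Local Open Scope ring_scope.

(* Vertices: mutable vertices 'I_n (the paper's [n]) and frozen vertices 'I_m. *)
Definition vert (n m : nat) : finType := ('I_n + 'I_m)%type.

Definition mutableb {n m} (x : vert n m) : bool := if x is inl _ then true else false.
Definition frozenb {n m} (x : vert n m) : bool := ~~ mutableb x.

(* A quiver is given by its arrow counts: a x y = number of arrows x -> y. *)
Definition is_quiver {n m} (a : vert n m -> vert n m -> nat) : Prop :=
  (forall x, a x x = 0%N) /\ (forall x y, a x y = 0%N \/ a y x = 0%N).

Definition bmat {n m} (a : vert n m -> vert n m -> nat) (x y : vert n m) : int :=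
  (a x y)%:Z - (a y x)%:Z.

Definition arr {n m} (a : vert n m -> vert n m -> nat) : rel (vert n m) :=
  fun x y => (0 < bmat a x y) && (mutableb x || mutableb y).

Definition has_cycle_on {n m} (a : vert n m -> vert n m -> nat) (S : pred (vert n m)) : Prop :=
  exists (x : vert n m) (s : seq (vert n m)), all S (x :: s) /\ cycle (arr a) (x :: s).

Definition acyclic_on {n m} (a : vert n m -> vert n m -> nat) (S : pred (vert n m)) : Prop :=
  ~ has_cycle_on a S.

Definition abundant_on {n m} (a : vert n m -> vert n m -> nat) (S : pred (vert n m)) : Prop :=
  forall x y, S x -> S y -> x != y -> (mutableb x || mutableb y) -> 2 <= `|bmat a x y|.

Definition Fplus {n m} (a : vert n m -> vert n m -> nat) (S : pred (vert n m)) (r : vert n m)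
  : pred (vert n m) := fun i => S i && arr a r i.
Definition Fminus {n m} (a : vert n m -> vert n m -> nat) (S : pred (vert n m)) (r : vert n m)
  : pred (vert n m) := fun j => S j && arr a j r.

Definition is_fork_on {n m} (a : vert n m -> vert n m -> nat) (S : pred (vert n m)) (r : vert n m)
  : Prop :=
  [/\ abundant_on a S,
      has_cycle_on a S,
      (#|[pred x | S x && frozenb x]| <= 1)%N,
      S r
    & [/\ (forall i j, Fplus a S r i -> Fminus a S r j ->
            bmat a r i < bmat a i j /\ bmat a j r < bmat a i j),
        acyclic_on a (Fplus a S r)
      & acyclic_on a (Fminus a S r)]].

Definition is_ice_fork {n m} (a : vert n m -> vert n m -> nat) (r : vert n m) : Prop :=
  (1 <= m)%N /\
  forall u : 'I_m, is_fork_on a (fun x => mutableb x || (x == inr u)) r.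

Definition is_red {n m} (a : vert n m -> vert n m -> nat) (i : 'I_n) : Prop :=
  (exists u : 'I_m, bmat a (inl i) (inr u) != 0) /\
  (forall u : 'I_m, bmat a (inl i) (inr u) <= 0).
Definition is_green {n m} (a : vert n m -> vert n m -> nat) (i : 'I_n) : Prop :=
  (exists u : 'I_m, bmat a (inl i) (inr u) != 0) /\
  (forall u : 'I_m, 0 <= bmat a (inl i) (inr u)).

Definition complementary {n m} (a : vert n m -> vert n m -> nat) (i j : 'I_n) : Prop :=
  forall u : 'I_m, bmat a (inl i) (inr u) != 0 -> bmat a (inl j) (inr u) != 0 ->
    bmat a (inl i) (inr u) * bmat a (inl j) (inr u) < 0.

Inductive colour := Blue | Red | Orange | Green.

Definition is_brog {n m} (a : vert n m -> vert n m -> nat) : Prop :=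
  exists c : 'I_n -> colour,
    [/\ (forall i, c i = Red <-> is_red a i),
        (forall i, c i = Green <-> is_green a i),
        (forall i j, c i = Blue -> (c j = Red -> 0 <= bmat a (inl i) (inl j))
                                /\ (c j = Green -> bmat a (inl i) (inl j) <= 0)),
        (forall i j, c i = Orange -> (c j = Green -> 0 <= bmat a (inl i) (inl j))
                                /\ (c j = Red -> bmat a (inl i) (inl j) <= 0))
      & (forall i j, c i = Blue -> c j = Orange -> complementary a i j)].

From mathcomp Require Import all_boot all_order all_algebra.
From mathcomp Require Import zify.
(* The point of return r lies in both forks Q|_{[n] u {u_k}}, so it is mutable, and
   abundance makes every mutable vertex adjacent to both frozen vertices: it is red,
   green, or mixed (one arrow to and one arrow from the frozen vertices). Colour the
   mixed vertex r orange and the other mixed vertices blue. In a fork every vertex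
   other than r lies in F^+(r) or F^-(r), and arrows between the two go from F^+ to
   F^-; since both are acyclic, no oriented 3-cycle avoids r. Each sign condition of
   a brog quiver fails only through such a 3-cycle passing through a frozen vertex, or
   through an arrow from F^- to F^+. Finally, with two frozen vertices, two mixed
   vertices are complementary as soon as their signs differ at one frozen vertex. *)

Set Implicit Arguments. Unset Strict Implicit. Unset Printing Implicit Defensive.
Import Order.TTheory GRing.Theory Num.Theory.
Local Open Scope ring_scope.

Section Forks.
Variables (n m : nat) (a : vert n m -> vert n m -> nat).

Lemma bmatC x y : bmat a x y = - bmat a y x.
Proof. by rewrite /bmat opprB. Qed.

Variables (S : pred (vert n m)) (r : vert n m).
Hypotheses (fork : is_fork_on a S r) (r_mutable : mutableb r).

Lemma fork_side x : S x -> x != r -> 0 < bmat a r x \/ 0 < bmat a x r.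
Proof.
case: fork => abund _ _ Sr _ Sx xr.
have := abund x r Sx Sr xr; rewrite r_mutable orbT => /(_ isT).
rewrite /bmat; lia.
Qed.

(* b_{yx} > b_{ry} > 0 for y in F^+(r) and x in F^-(r). *)
Lemma fork_cross x y : S x -> S y -> 0 < bmat a r y -> 0 < bmat a x r -> 0 < bmat a y x.
Proof.
case: fork => _ _ _ _ [sep _ _] Sx Sy ry xr.
have Fy : Fplus a S r y by rewrite /Fplus Sy /arr ry r_mutable.
have Fx : Fminus a S r x by rewrite /Fminus Sx /arr xr r_mutable orbT.
have [ry_lt _] := sep y x Fy Fx.
exact: lt_trans ry ry_lt.
Qed.

Lemma fork_no_3cycle x y z : mutableb x -> mutableb z -> S x -> S y -> S z ->
  x != r -> y != r -> z != r ->
  0 < bmat a x y -> 0 < bmat a y z -> 0 < bmat a z x -> False.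
Proof.
move=> mx mz Sx Sy Sz xr yr zr xy yz zx.
have [_ _ _ _ [_ acyc_plus acyc_minus]] := fork.
have asym p q : 0 < bmat a p q -> 0 < bmat a q p -> False by rewrite /bmat; lia.
have [rx|xr'] := fork_side Sx xr; have [ry|yr'] := fork_side Sy yr;
  have [rz|zr'] := fork_side Sz zr.
- apply: acyc_plus; exists x, [:: y; z].
  by rewrite /= /Fplus Sx Sy Sz /arr rx ry rz xy yz zx r_mutable mx mz !orbT.
- exact: asym _ _ (fork_cross Sz Sx rx zr') zx.
- exact: asym _ _ (fork_cross Sy Sz rz yr') yz.
- exact: asym _ _ (fork_cross Sz Sx rx zr') zx.
- exact: asym _ _ (fork_cross Sx Sy ry xr') xy.
- exact: asym _ _ (fork_cross Sx Sy ry xr') xy.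
- exact: asym _ _ (fork_cross Sy Sz rz yr') yz.
- apply: acyc_minus; exists x, [:: y; z].
  by rewrite /= /Fminus Sx Sy Sz /arr xr' yr' zr' xy yz zx r_mutable mx mz !orbT.
Qed.

End Forks.

Definition mutable_with {n m} (u : 'I_m) : pred (vert n m) :=
  fun x => mutableb x || (x == inr u).

Lemma fork_return_mutable n m (a : vert n m -> vert n m -> nat) r (u v : 'I_m) :
  u != v -> is_fork_on a (mutable_with u) r -> is_fork_on a (mutable_with v) r ->
  mutableb r.
Proof.
move=> uv [_ _ _ ru _] [_ _ _ rv _]; case: r ru rv => //= w /eqP[->] /eqP[wv].
by rewrite wv eqxx in uv.
Qed.

Section IceFork.
Variables (n m : nat) (a : vert n m.+1 -> vert n m.+1 -> nat) (r : 'I_n).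
Hypothesis fork : forall u, is_fork_on a (mutable_with u) (inl r).

Lemma mutable_with_frozen (u : 'I_m.+1) : mutable_with (n := n) u (inr u).
Proof. by rewrite /mutable_with eqxx. Qed.

Lemma ice_fork_frozen_adj i u : bmat a (inl i) (inr u) != 0.
Proof.
have [abund _ _ _ _] := fork u.
have := abund (inl i) (inr u) isT (mutable_with_frozen u) isT isT.
rewrite /bmat; lia.
Qed.

Definition redb i := [forall u, bmat a (inl i) (inr u) < 0].
Definition greenb i := [forall u, 0 < bmat a (inl i) (inr u)].

Lemma redP i : is_red a i <-> redb i.
Proof.
split=> [[_ neg]|/forallP neg].
  by apply/forallP=> u; rewrite lt_neqAle ice_fork_frozen_adj neg.
by split=> [|u]; [exists ord0; exact: ltr0_neq0|exact: ltW].
Qed.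

Lemma greenP i : is_green a i <-> greenb i.
Proof.
split=> [[_ pos]|/forallP pos].
  by apply/forallP=> u; rewrite lt_neqAle eq_sym ice_fork_frozen_adj pos.
by split=> [|u]; [exists ord0; exact: lt0r_neq0|exact: ltW].
Qed.

Lemma not_redb i : ~~ redb i -> exists u, 0 < bmat a (inl i) (inr u).
Proof.
rewrite negb_forall => /existsP[u nneg]; exists u.
by have := ice_fork_frozen_adj i u; lia.
Qed.

Lemma not_greenb i : ~~ greenb i -> exists u, bmat a (inl i) (inr u) < 0.
Proof.
rewrite negb_forall => /existsP[u npos]; exists u.
by have := ice_fork_frozen_adj i u; lia.
Qed.

Lemma redb_not_greenb i : redb i -> ~~ greenb i.
Proof.
move=> /forallP /(_ ord0) neg; apply/negP => /forallP /(_ ord0).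
by rewrite ltNge (ltW neg).
Qed.

Lemma blue_red_ge0 i j : i != r -> ~~ redb i -> ~~ greenb i -> redb j ->
  0 <= bmat a (inl i) (inl j).
Proof.
move=> ir nred ngreen /forallP jred; rewrite leNgt bmatC oppr_lt0; apply/negP => ji.
have [jr|jr] := eqVneq j r.
  subst j; move/negP: ngreen; apply; apply/forallP => u.
  have ur : 0 < bmat a (inr u) (inl r) by rewrite bmatC oppr_gt0.
  exact: (fork_cross (fork u) isT (y := inl i) (mutable_with_frozen u) isT ji ur).
have [k ik] := not_redb nred.
apply: (fork_no_3cycle (fork k) isT (x := inl i) (z := inl j) isT isT isT
  (mutable_with_frozen k) isT _ _ _ ik _ ji) => //.
by rewrite bmatC oppr_gt0.
Qed.

Lemma blue_green_le0 i j : i != r -> ~~ redb i -> ~~ greenb i -> greenb j ->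
  bmat a (inl i) (inl j) <= 0.
Proof.
move=> ir nred ngreen /forallP jgreen; rewrite leNgt; apply/negP => ij.
have [jr|jr] := eqVneq j r.
  subst j; move/negP: nred; apply; apply/forallP => u; rewrite -oppr_gt0 -bmatC.
  exact: (fork_cross (fork u) isT (x := inl i) isT (mutable_with_frozen u) (jgreen u) ij).
have [l li] := not_greenb ngreen.
apply: (fork_no_3cycle (fork l) isT (x := inl j) (z := inl i) isT isT isT
  (mutable_with_frozen l) isT _ _ _ (jgreen l) _ ij) => //.
by rewrite bmatC oppr_gt0.
Qed.

Lemma orange_green_ge0 j : ~~ redb r -> greenb j -> 0 <= bmat a (inl r) (inl j).
Proof.
move=> nred /forallP jgreen; rewrite leNgt bmatC oppr_lt0; apply/negP => jr.
have [k rk] := not_redb nred.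
have := fork_cross (fork k) isT (x := inl j) isT (mutable_with_frozen k) rk jr.
by rewrite bmatC oppr_gt0 ltNge (ltW (jgreen k)).
Qed.

Lemma orange_red_le0 j : ~~ greenb r -> redb j -> bmat a (inl r) (inl j) <= 0.
Proof.
move=> ngreen /forallP jred; rewrite leNgt; apply/negP => rj.
have [l rl] := not_greenb ngreen.
have lr : 0 < bmat a (inr l) (inl r) by rewrite bmatC oppr_gt0.
have := fork_cross (fork l) isT (y := inl j) (mutable_with_frozen l) isT rj lr.
by rewrite ltNge (ltW (jred l)).
Qed.

Lemma frozen_sign_differs i : i != r -> ~~ redb r -> ~~ greenb r ->
  exists u, bmat a (inl i) (inr u) * bmat a (inl r) (inr u) < 0.
Proof.
move=> ir nred ngreen.
have [ri|ir'] := fork_side (fork ord0) isT (x := inl i) isT ir.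
  have [w rw] := not_greenb ngreen; exists w.
  have wr : 0 < bmat a (inr w) (inl r) by rewrite bmatC oppr_gt0.
  have iw := fork_cross (fork w) isT (y := inl i) (mutable_with_frozen w) isT ri wr.
  by rewrite pmulr_rlt0.
have [w rw] := not_redb nred; exists w.
have := fork_cross (fork w) isT (x := inl i) isT (mutable_with_frozen w) rw ir'.
by rewrite bmatC oppr_gt0 => wi; rewrite nmulr_rlt0.
Qed.

Definition ice_colouring i : colour :=
  if redb i then Red else if greenb i then Green else if i == r then Orange else Blue.

Lemma ice_colouring_Red i : ice_colouring i = Red <-> redb i.
Proof.
rewrite /ice_colouring; case: redb; split=> //.
by case: greenb => //; case: eqP.
Qed.

Lemma ice_colouring_Green i : ice_colouring i = Green <-> greenb i.
Proof.
rewrite /ice_colouring; case Ri: (redb i).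
  by rewrite (negbTE (redb_not_greenb Ri)).
by case: greenb; split=> //; case: eqP.
Qed.

Lemma ice_colouring_Blue i :
  ice_colouring i = Blue -> [/\ i != r, ~~ redb i & ~~ greenb i].
Proof. by rewrite /ice_colouring; case: redb => //; case: greenb => //; case: eqP. Qed.

Lemma ice_colouring_Orange i :
  ice_colouring i = Orange -> [/\ i = r, ~~ redb r & ~~ greenb r].
Proof. by rewrite /ice_colouring; case: eqP => [->|_]; case: redb; case: greenb. Qed.

End IceFork.

Section TwoFrozen.
Variables (n : nat) (a : vert n 2 -> vert n 2 -> nat) (r : 'I_n).
Hypothesis fork : forall u, is_fork_on a (mutable_with u) (inl r).

Lemma ord2_cases (u w v : 'I_2) : u != w -> v = u \/ v = w.
Proof.
move=> uw; have [|vu] := eqVneq v u; [by left|right].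
apply/val_inj/eqP; move: uw vu; rewrite -!(inj_eq val_inj) /=.
by have := ltn_ord u; have := ltn_ord w; have := ltn_ord v; lia.
Qed.

Lemma mixed2_sign i u w : ~~ redb a i -> ~~ greenb a i -> u != w ->
  bmat a (inl i) (inr u) * bmat a (inl i) (inr w) < 0.
Proof.
move=> nred ngreen uw.
have [k ik] := not_redb fork nred; have [l il] := not_greenb fork ngreen.
case: (ord2_cases k uw) => -> in ik; case: (ord2_cases l uw) => -> in il;
  move: ik il; set x := bmat a _ (inr u); set y := bmat a _ (inr w); nia.
Qed.

Lemma complementary_mixed2 i j w :
  ~~ redb a i -> ~~ greenb a i -> ~~ redb a j -> ~~ greenb a j ->
  bmat a (inl i) (inr w) * bmat a (inl j) (inr w) < 0 -> complementary a i j.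
Proof.
move=> nri ngi nrj ngj ijw u _ _; have [->//|uw] := eqVneq u w.
have := mixed2_sign nri ngi uw; have := mixed2_sign nrj ngj uw; move: ijw.
set iu := bmat a (inl i) (inr u); set iw := bmat a (inl i) (inr w).
set ju := bmat a (inl j) (inr u); set jw := bmat a (inl j) (inr w).
nia.
Qed.

Lemma ice_fork2_brog : is_brog a.
Proof.
exists (ice_colouring a r); split=> [i|i|i j|i j|i j].
- by rewrite ice_colouring_Red (redP fork).
- by rewrite ice_colouring_Green (greenP fork).
- move=> /ice_colouring_Blue[ir nri ngi].
  split=> [/ice_colouring_Red|/ice_colouring_Green].
  + exact: (blue_red_ge0 fork ir nri ngi).
  + exact: (blue_green_le0 fork ir nri ngi).
- move=> /ice_colouring_Orange[-> nrr ngr].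
  split=> [/ice_colouring_Green|/ice_colouring_Red].
  + exact: (orange_green_ge0 fork nrr).
  + exact: (orange_red_le0 fork ngr).
- move=> /ice_colouring_Blue[ir nri ngi] /ice_colouring_Orange[-> nrr ngr].
  have [w iw] := frozen_sign_differs fork ir nrr ngr.
  exact: (complementary_mixed2 nri ngi nrr ngr iw).
Qed.

End TwoFrozen.

Theorem mainTheorem12 (n : nat) (a : vert n 2 -> vert n 2 -> nat) (r : vert n 2) :
  is_quiver a -> is_ice_fork a r -> is_brog a.
Proof.
move=> _ [_ fork].
have : mutableb r := fork_return_mutable (u := 0) (v := 1) isT (fork 0) (fork 1).
by case: r fork => // r fork _; exact: ice_fork2_brog fork.
Qed.
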